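(* Let $(X,\Sigma)$ be a measurable space, $(\mathcal{E}_t)_{t\ge0}$ a process of pavings, $\mathbf{F}_0^2\subseteq\mathbf{F}\times\mathbf{F}$ a nonempty set of pairs, $\boldsymbol{\mu}=(\mu_t)_{t\ge0}$ a nonincreasing family of monotone measures on $\Sigma$, and $\mathscr{A}=\{\mathsf{A}_t(\cdot|E)\colon E\in\mathcal{E}_t,\,t\ge0\}$ a nonincreasing parametric family of conditional aggregation operators which is $c$-quasi-subadditive on $\mathbf{F}_0^2$ (for some $c\in[1,\infty)$). Then $$\boldsymbol{\mu}_{\mathscr{A}}(f+g,ct)\le\boldsymbol{\mu}_{\mathscr{A}}(f,\lambda t)\vee\boldsymbol{\mu}_{\mathscr{A}}(g,(1-\lambda)t)$$ for every $t\ge0$, every $\lambda\in(0,1)$ and every $(f,g)\in\mathbf{F}_0^2$.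
   Context: $a\vee b=\max\{a,b\}$. $\Sigma^0=\Sigma\setminus\{\emptyset\}$. $\mathbf{F}$ denotes the set of all $\Sigma$-measurable, nonnegative, bounded functions $f\colon X\to[0,\infty)$. A monotone measure is a map $\mu\colon\Sigma\to[0,\infty]$ with $\mu(B)\le\mu(C)$ whenever $B\subseteq C$, $\mu(\emptyset)=0$ and $\mu(X)>0$. For $E\in\Sigma^0$, a conditional aggregation operator (CAO) w.r.t. $E$ is a map $\mathsf{A}(\cdot|E)\colon\mathbf{F}\to[0,\infty]$ such that (C1) $\mathsf{A}(f|E)\le\mathsf{A}(g|E)$ whenever $f(x)\le g(x)$ for all $x\in E$, and (C2) $\mathsf{A}(\mathbf{1}_{X\setminus E}|E)=0$. A process of pavings is a family $(\mathcal{E}_t)_{t\ge0}$ with $\emptyset\in\mathcal{E}_t\subseteq\Sigma$ for all $t$; $\mathcal{E}_t^0=\mathcal{E}_t\setminus\{\emptyset\}$. A parametric family of CAOs (pFCA) $\{\mathsf{A}_t(\cdot|E)\colon E\in\mathcal{E}_t,\,t\ge0\}$ consists of CAOs $\mathsf{A}_t(\cdot|E)$ w.r.t. $E$ for each $t$ and $E\in\mathcal{E}_t^0$, with the convention $\mathsf{A}_t(\cdot|\emptyset)=\infty$. The generalized level measure is $\boldsymbol{\mu}_{\mathscr{A}}(f,t)=\sup\{\mu_t(E)\colon \mathsf{A}_t(f|E)\ge t,\ E\in\mathcal{E}_t\}$ for $t\ge0$. $\boldsymbol{\mu}$ is nonincreasing if $\mu_s(E)\ge\mu_t(E)$ for all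 $E\in\Sigma$ and $s<t$. The pFCA is nonincreasing if $\mathcal{E}_t\subseteq\mathcal{E}_s$ and $\mathsf{A}_s(f|E)\ge\mathsf{A}_t(f|E)$ for all $f\in\mathbf{F}$, $E\in\mathcal{E}_t^0$, $0\le s<t$. It is $c$-quasi-subadditive on $\mathbf{F}_0^2$ if $c\in[1,\infty)$ and $\mathsf{A}_t(f+g|E)\le c(\mathsf{A}_t(f|E)+\mathsf{A}_t(g|E))$ for all $(f,g)\in\mathbf{F}_0^2$, all $E\in\mathcal{E}_t^0$ and all $t>0$. *)

From HB Require Import structures.
From mathcomp Require Import all_boot all_order all_algebra.
From mathcomp Require Import all_classical all_reals all_analysis.
Set Implicit Arguments. Unset Strict Implicit. Unset Printing Implicit Defensive.
Import Order.TTheory GRing.Theory Num.Theory.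
Local Open Scope classical_set_scope.
Local Open Scope ring_scope.
Local Open Scope ereal_scope.

Section Defs.
Context {d : measure_display} {X : measurableType d} {R : realType}.

Definition Fset (f : X -> R) : Prop :=
  measurable_fun setT f /\ (forall x, (0 <= f x)%R) /\ exists M : R, forall x, (f x <= M)%R.

Definition monotone_measure (mu : set X -> \bar R) : Prop :=
  (forall B, measurable B -> 0 <= mu B) /\
  (forall B C, measurable B -> measurable C -> B `<=` C -> mu B <= mu C) /\
  mu set0 = 0 /\ 0 < mu setT.

Definition CAO (Ag : (X -> R) -> \bar R) (E : set X) : Prop :=
  (forall f, Fset f -> 0 <= Ag f) /\
  (forall f g, Fset f -> Fset g -> (forall x, E x -> (f x <= g x)%R) -> Ag f <= Ag g) /\
  Ag (\1_(~` E)) = 0.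

Definition process_of_pavings (Ecal : R -> set (set X)) : Prop :=
  forall t : R, (0 <= t)%R -> Ecal t set0 /\ Ecal t `<=` measurable.

Definition pFCA (Ecal : R -> set (set X)) (A : R -> set X -> (X -> R) -> \bar R) : Prop :=
  forall t : R, (0 <= t)%R -> forall E, Ecal t E -> E <> set0 -> CAO (A t E) E.

Definition nonincreasing_measures (mu : R -> set X -> \bar R) : Prop :=
  forall s t : R, (0 <= s)%R -> (s < t)%R -> forall E, measurable E -> mu t E <= mu s E.

Definition nonincreasing_pFCA (Ecal : R -> set (set X))
    (A : R -> set X -> (X -> R) -> \bar R) : Prop :=
  forall s t : R, (0 <= s)%R -> (s < t)%R ->
    Ecal t `<=` Ecal s /\
    (forall f E, Fset f -> Ecal t E -> E <> set0 -> A t E f <= A s E f).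

Definition quasi_subadditive (c : R) (F02 : set ((X -> R) * (X -> R)))
    (Ecal : R -> set (set X)) (A : R -> set X -> (X -> R) -> \bar R) : Prop :=
  (1 <= c)%R /\
  forall f g, F02 (f, g) -> forall t : R, (0 < t)%R ->
    forall E, Ecal t E -> E <> set0 ->
      A t E (f \+ g)%R <= c%:E * (A t E f + A t E g).

(* Generalized level measure; the empty set is admitted (A_t(.|emptyset) = oo). *)
Definition level_measure (mu : R -> set X -> \bar R) (Ecal : R -> set (set X))
    (A : R -> set X -> (X -> R) -> \bar R) (f : X -> R) (t : R) : \bar R :=
  ereal_sup [set mu t E | E in [set E | Ecal t E /\ (E = set0 \/ t%:E <= A t E f)]].

End Defs.

From HB Require Import structures.
From mathcomp Require Import all_boot all_order all_algebra.
From mathcomp Require Import all_classical all_reals all_analysis.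
Import Order.TTheory GRing.Theory Num.Theory.
Local Open Scope classical_set_scope.
Local Open Scope ring_scope.

(* Fix a set E counted by the level measure of f + g at level c t, i.e. with
   A_{ct}(f + g | E) >= c t. Quasi-subadditivity gives
   A_{ct}(f | E) + A_{ct}(g | E) >= t = lam t + (1 - lam) t, so
   A_{ct}(f | E) >= lam t or A_{ct}(g | E) >= (1 - lam) t. Since both levels
   lie below c t and the pavings, the operators and the measures all decrease
   in the level, E is then also counted by the level measure of f at lam t or
   by that of g at (1 - lam) t, with no smaller weight. *)

Lemma leeD_split (R : realDomainType) (x y : R) (a b : \bar R) :
  ((x + y)%:E <= a + b)%E -> (x%:E <= a)%E \/ (y%:E <= b)%E.
Proof.
move=> xy_le_ab.
case: (leP x%:E a) => [|a_lt_x]; first by left.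
case: (leP y%:E b) => [|b_lt_y]; first by right.
by move: (lteD a_lt_x b_lt_y); rewrite -EFinD ltNge xy_le_ab.
Qed.

Section LevelMeasure.
Context {d : measure_display} {X : measurableType d} {R : realType}.
Context {Ecal : R -> set (set X)} {mu : R -> set X -> \bar R}
  {A : R -> set X -> (X -> R) -> \bar R}.

Lemma level_measure_ge {h : X -> R} {s : R} {E : set X} :
  Ecal s E -> (E = set0 \/ (s%:E <= A s E h)%E) ->
  (mu s E <= level_measure mu Ecal A h s)%E.
Proof. by move=> Es HE; apply: ereal_sup_ubound; exists E. Qed.

Hypotheses (paving : process_of_pavings Ecal)
  (mu_decr : nonincreasing_measures mu) (A_decr : nonincreasing_pFCA Ecal A).

Lemma level_measure_ge_lower_level {h : X -> R} {s r : R} {E : set X} :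
  Fset h -> 0 <= s <= r -> Ecal r E -> (E = set0 \/ (s%:E <= A r E h)%E) ->
  (mu r E <= level_measure mu Ecal A h s)%E.
Proof.
move=> Fh /andP[s_ge0 s_le_r] Er HE.
have [s_eq_r|s_lt_r] := eqVneq s r.
  by subst r; exact: level_measure_ge Er HE.
have {}s_lt_r : s < r by rewrite lt_neqAle s_lt_r.
have [Ecal_sub A_le] := A_decr _ _ s_ge0 s_lt_r.
have mE : measurable E by case: (paving _ (le_trans s_ge0 s_le_r)) => _ /(_ _ Er).
apply: le_trans (mu_decr _ _ s_ge0 s_lt_r _ mE) (level_measure_ge (Ecal_sub _ Er) _).
have [E0|/eqP E_neq0] := eqVneq E set0; first by left.
by right; case: HE => [//|HE]; apply: le_trans HE (A_le _ _ Fh Er E_neq0).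
Qed.

End LevelMeasure.

Lemma level_split_of_quasi_subadditive {d : measure_display}
    {X : measurableType d} {R : realType} {Ecal : R -> set (set X)}
    {F02 : set ((X -> R) * (X -> R))} {A : R -> set X -> (X -> R) -> \bar R}
    {c t : R} (lam : R) {f g : X -> R} {E : set X} :
  pFCA Ecal A -> quasi_subadditive c F02 Ecal A -> Fset f ->
  F02 (f, g) -> 0 <= t -> Ecal (c * t) E -> E <> set0 ->
  ((c * t)%:E <= A (c * t)%R E (f \+ g)%R)%E ->
  ((lam * t)%:E <= A (c * t)%R E f)%E \/
  (((1 - lam) * t)%:E <= A (c * t)%R E g)%E.
Proof.
move=> CAO_A [c_ge1 subadd] Ff fg t_ge0 Ect E_neq0 level_fg.
have c_gt0 : 0 < c by apply: lt_le_trans c_ge1.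
have [t0|t_neq0] := eqVneq t 0.
  rewrite t0 mulr0 in Ect *; left; rewrite mulr0.
  by case: (CAO_A 0 (lexx 0) E Ect E_neq0) => /(_ f Ff).
have t_gt0 : 0 < t by rewrite lt_neqAle eq_sym t_neq0.
apply: leeD_split; rewrite -mulrDl addrCA subrr addr0 mul1r.
rewrite -(@lee_pmul2l _ c%:E) ?lte_fin // -EFinM.
exact: le_trans level_fg (subadd _ _ fg _ (mulr_gt0 c_gt0 t_gt0) _ Ect E_neq0).
Qed.

Theorem proposition3p14 (d : measure_display) (X : measurableType d) (R : realType)
  (Ecal : R -> set (set X)) (F02 : set ((X -> R) * (X -> R)))
  (mu : R -> set X -> \bar R) (A : R -> set X -> (X -> R) -> \bar R) (c : R) :
  process_of_pavings Ecal ->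
  F02 `<=` [set p | Fset p.1 /\ Fset p.2] ->
  F02 !=set0 ->
  (forall t : R, 0 <= t -> monotone_measure (mu t)) ->
  nonincreasing_measures mu ->
  pFCA Ecal A ->
  nonincreasing_pFCA Ecal A ->
  quasi_subadditive c F02 Ecal A ->
  forall (t lam : R), 0 <= t -> 0 < lam < 1 ->
  forall f g, F02 (f, g) ->
    (level_measure mu Ecal A (f \+ g)%R (c * t)%R
     <= maxe (level_measure mu Ecal A f (lam * t)%R)
             (level_measure mu Ecal A g ((1 - lam) * t)%R))%E.
Proof.
move=> paving F02_F _ _ mu_decr CAO_A A_decr subadd t lam t_ge0
  /andP[lam_gt0 lam_lt1] f g fg.
have [/= Ff Fg] := F02_F _ fg.
have c_ge1 : 1 <= c by case: subadd.
have lam_t : 0 <= lam * t <= c * t.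
  by rewrite mulr_ge0 ?(ltW lam_gt0) // ler_wpM2r // (le_trans (ltW lam_lt1)).
have lam'_t : 0 <= (1 - lam) * t <= c * t.
  rewrite mulr_ge0 ?subr_ge0 ?(ltW lam_lt1) // ler_wpM2r //.
  by apply: le_trans c_ge1; rewrite gerBl ltW.
apply: ge_ereal_sup => _ [E [Ect level_fg] <-]; rewrite le_max; apply/orP.
have lower_f := level_measure_ge_lower_level paving mu_decr A_decr Ff lam_t Ect.
have lower_g := level_measure_ge_lower_level paving mu_decr A_decr Fg lam'_t Ect.
have [E0|/eqP E_neq0] := eqVneq E set0; first by left; apply: lower_f; left.
case: level_fg => [//|level_fg].
have [level|level] :=
  level_split_of_quasi_subadditive lam CAO_A subadd Ff fg t_ge0 Ect E_neq0 level_fg.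
- by left; exact: lower_f (or_intror level).
- by right; exact: lower_g (or_intror level).
Qed.
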